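(* Let $A=K[X_1,\ldots,X_n]$ over a field $K$, and let $I,J\subseteq A$ be homogeneous ideals with canonical universal Gr\''obner bases $G_1$ and $G_2$ respectively. If $\operatorname{supp}(G_1)=\operatorname{supp}(G_2)$, then $\operatorname{Gf}(I)=\operatorname{Gf}(J)$; that is, for all weights $\omega,\omega'\in\mathbb R^n$ one has $\operatorname{in}_\omega(I)=\operatorname{in}_{\omega'}(I)$ if and only if $\operatorname{in}_\omega(J)=\operatorname{in}_{\omega'}(J)$.
   Context: For a nonzero polynomial $f$, $\operatorname{supp}(f)$ is the set of monomials appearing in $f$ with nonzero coefficient; for a set $G$ of polynomials, $\operatorname{supp}(G)=\{\operatorname{supp}(f):f\in G, f\ne 0\}$. The canonical universal Gr\''obner basis of a homogeneous ideal is the union of its reduced Gr\''obner bases with respect to all monomial orders (a finite set). For $\omega\in\mathbb R^n$, $\operatorname{in}_\omega(f)$ is the sum of the terms of $f$ whose exponent vector $\mathbf a$ maximizes $\omega\cdot\mathbf a$, and $\operatorname{in}_\omega(I)$ is the ideal generated by all $\operatorname{in}_\omega(f)$, $f\in I$. The Gr\''obner fan $\operatorname{Gf}(I)$ is the fan consisting of the closures (in the Euclidean topology) of the equivalence classes of the relation on $\mathbb R^n$: $\omega\sim\omega'$ iff $\operatorname{in}_\omega(I)=\operatorname{in}_{\omega'}(I)$. *)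

From HB Require Import structures.
From mathcomp Require Import all_boot all_order all_algebra.
From mathcomp Require Import reals.
From mathcomp Require Import mpoly.
Set Implicit Arguments. Unset Strict Implicit. Unset Printing Implicit Defensive.
Import Order.TTheory GRing.Theory Num.Theory.
Local Open Scope ring_scope.

Section GroebnerDefs.
Variables (n : nat) (K : fieldType).
Local Notation A := {mpoly K[n]}.
Local Notation mon := 'X_{1..n}.

Definition is_ideal (I : A -> Prop) : Prop :=
  [/\ I 0, (forall f g, I f -> I g -> I (f + g)) & (forall r f, I f -> I (r * f))].

Definition hcomp (d : nat) (f : A) : A :=
  \sum_(m <- msupp f | mdeg m == d) f@_m *: 'X_[m].

Definition is_homogeneous_ideal (I : A -> Prop) : Prop :=
  is_ideal I /\ forall f d, I f -> I (hcomp d f).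

Definition ideal_gen (S : A -> Prop) : A -> Prop :=
  fun p => exists s : seq (A * A),
    (forall x, x \in s -> S x.2) /\ p = \sum_(x <- s) x.1 * x.2.

Definition same_set (S T : A -> Prop) : Prop := forall p, S p <-> T p.

Definition monomial_order (ord : rel mon) : Prop :=
  [/\ reflexive ord, antisymmetric ord, transitive ord & total ord] /\
  (forall m1 m2 m, ord m1 m2 -> ord (m1 + m)%MM (m2 + m)%MM) /\
  well_founded (fun a b => (a != b) && ord a b).

Definition is_LM (ord : rel mon) (f : A) (m : mon) : Prop :=
  m \in msupp f /\ forall m', m' \in msupp f -> ord m' m.

Definition init_ideal_ord (ord : rel mon) (I : A -> Prop) : A -> Prop :=
  ideal_gen (fun p => exists f m, [/\ I f, f != 0, is_LM ord f m & p = 'X_[m]]).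

Definition is_groebner (ord : rel mon) (I : A -> Prop) (G : seq A) : Prop :=
  (forall g, g \in G -> I g) /\
  same_set (init_ideal_ord ord I)
    (ideal_gen (fun p => exists g m, [/\ g \in G, g != 0, is_LM ord g m & p = 'X_[m]])).

Definition mdivides (m1 m2 : mon) : bool := [forall i, m1 i <= m2 i]%N.

Definition is_reduced_groebner (ord : rel mon) (I : A -> Prop) (G : seq A) : Prop :=
  [/\ is_groebner ord I G,
      (forall g, g \in G -> exists m, is_LM ord g m /\ g@_m = 1)
    & (forall g g' m m', g \in G -> g' \in G -> g != g' ->
         is_LM ord g' m' -> m \in msupp g -> ~~ mdivides m' m)].

Definition in_cUGB (I : A -> Prop) (f : A) : Prop :=
  exists ord G, [/\ monomial_order ord, is_reduced_groebner ord I G & f \in G].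

Definition same_supports (G1 G2 : A -> Prop) : Prop :=
  (forall f, G1 f -> f != 0 -> exists g, [/\ G2 g, g != 0 & msupp g =i msupp f]) /\
  (forall g, G2 g -> g != 0 -> exists f, [/\ G1 f, f != 0 & msupp f =i msupp g]).

End GroebnerDefs.

Section WeightDefs.
Variables (n : nat) (K : fieldType) (R : realType).
Local Notation A := {mpoly K[n]}.

Definition wdot (w : 'I_n -> R) (m : 'X_{1..n}) : R := \sum_(i < n) w i * (m i)%:R.

Definition init_w (w : 'I_n -> R) (f : A) : A :=
  \sum_(m <- msupp f | all (fun m' => wdot w m' <= wdot w m) (msupp f)) f@_m *: 'X_[m].

Definition init_ideal_w (w : 'I_n -> R) (I : A -> Prop) : A -> Prop :=
  ideal_gen (fun p => exists f, I f /\ p = init_w w f).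

End WeightDefs.

From HB Require Import structures.
From mathcomp Require Import all_boot all_order all_algebra.
From mathcomp Require Import reals.
From mathcomp Require Import mpoly.
From Stdlib Require Import Classical.
Set Implicit Arguments. Unset Strict Implicit. Unset Printing Implicit Defensive.
Import Order.TTheory GRing.Theory Num.Theory.
Local Open Scope ring_scope.

(* Fix [w] and refine it to the monomial order [weight_order w] (total degree, then
   [w], then a tie-break).  For a homogeneous ideal [J], [in_w(J)] is generated by the
   [w]-initial forms of the reduced Groebner basis of [J], and every leading monomial
   of [in_w(I)] is a leading monomial of [I].
   Assume [in_w'(I) <= in_w(I)]; let [h] be an element of the reduced basis of [J] with
   leading monomial [nu], and [g] the element of cUGB(I) with the support of [h].  Both
   [in_w(g)] and [in_w'(g)] lie in [in_w(I)] and are supported in [supp h].  A nonzero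
   element of [in_w(I)] supported in [supp h] minus [nu] would have a leading monomial
   of [I], divisible by that of an element of the reduced basis of [I]; the element of
   cUGB(J) with the same support makes it a leading monomial of [J] lying in [supp h],
   against the reducedness of [h].  Since [in_w(g)] has a nonzero coefficient at [nu],
   this forces [in_w(g) = in_w'(g)].  That equation depends only on the support, so
   [in_w(h) = in_w'(h)], whence [in_w(J) <= in_w'(J)].  Symmetry concludes. *)

Section Filter.
Variables (n : nat) (K : fieldType).
Local Notation A := {mpoly K[n]}.
Local Notation mon := 'X_{1..n}.

Definition mfilter (P : pred mon) (f : A) : A :=
  \sum_(m <- msupp f | P m) f@_m *: 'X_[m].

Lemma mcoeff_mfilter P f m : (mfilter P f)@_m = if P m then f@_m else 0.
Proof.
rewrite /mfilter raddf_sum /=.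
under eq_bigr do rewrite mcoeffZ mcoeffX.
rewrite -big_filter.
case: (boolP (m \in [seq x <- msupp f | P x])) => Hm.
- rewrite (bigD1_seq m) ?filter_uniq ?msupp_uniq //= eqxx mulr1 big1 ?addr0.
  + by move: Hm; rewrite mem_filter => /andP [->].
  + by move=> i /negbTE Hi; rewrite Hi mulr0.
- rewrite big1_seq.
  + move: Hm; rewrite mem_filter negb_and; case: (P m) => //= H.
    by rewrite memN_msupp_eq0.
  + move=> i /andP [_ Hi]; case: eqP => [Ei|]; last by rewrite mulr0.
    by move: Hm; rewrite -Ei Hi.
Qed.

Lemma eq_mfilter (P Q : pred mon) f : P =1 Q -> mfilter P f = mfilter Q f.
Proof. by move=> E; apply/mpolyP => m; rewrite !mcoeff_mfilter E. Qed.

Lemma mfilter0 P : mfilter P 0 = 0.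
Proof. by apply/mpolyP => m; rewrite mcoeff_mfilter mcoeff0; case: (P m). Qed.

Lemma mfilterD P f g : mfilter P (f + g) = mfilter P f + mfilter P g.
Proof.
apply/mpolyP => m; rewrite mcoeffD !mcoeff_mfilter mcoeffD.
by case: (P m); rewrite ?addr0.
Qed.

Lemma mfilterZ P c f : mfilter P (c *: f) = c *: mfilter P f.
Proof.
apply/mpolyP => m; rewrite mcoeffZ !mcoeff_mfilter mcoeffZ.
by case: (P m); rewrite ?mulr0.
Qed.

Lemma mfilter_sum P (T : Type) (r : seq T) (F : T -> A) :
  mfilter P (\sum_(x <- r) F x) = \sum_(x <- r) mfilter P (F x).
Proof.
elim: r => [|x r IH]; first by rewrite !big_nil mfilter0.
by rewrite !big_cons mfilterD IH.
Qed.

Lemma msupp_mfilter P f m : (m \in msupp (mfilter P f)) = P m && (m \in msupp f).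
Proof. by rewrite !mcoeff_msupp mcoeff_mfilter; case: (P m); rewrite ?eqxx. Qed.

Lemma msupp_mfilter_sub P f : {subset msupp (mfilter P f) <= msupp f}.
Proof. by move=> m; rewrite msupp_mfilter => /andP []. Qed.

Lemma mcoeffMX_eq0 (p : A) a m : ~~ (a <= m)%MM -> (p * 'X_[a])@_m = 0.
Proof.
move=> H; apply: memN_msupp_eq0; rewrite (perm_mem (msuppMX _ _)).
by apply/mapP => -[k _ Ek]; move: H; rewrite Ek lem_addr.
Qed.

Lemma mfilterMX (P : pred mon) (f : A) a :
  mfilter P (f * 'X_[a]) = mfilter (fun k => P (a + k)%MM) f * 'X_[a].
Proof.
apply/mpolyP => m; rewrite mcoeff_mfilter.
case: (boolP (a <= m)%MM) => H; last by rewrite !mcoeffMX_eq0 //; case: ifP.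
by rewrite -(submK H) addmC !mcoeffMX mcoeff_mfilter; case: ifP.
Qed.

Lemma hcompE d (f : A) : hcomp d f = mfilter (fun m => mdeg m == d) f.
Proof. by []. Qed.

Lemma mcoeff_hcomp d (f : A) m : (hcomp d f)@_m = if mdeg m == d then f@_m else 0.
Proof. by rewrite hcompE mcoeff_mfilter. Qed.

Lemma hcomp_homog d (f : A) : hcomp d f \is d.-homog.
Proof.
apply/dhomogP => m; rewrite mcoeff_msupp mcoeff_hcomp.
by case: ifP => [/eqP | _]; rewrite ?eqxx.
Qed.

Lemma sum_hcomp (f : A) : f = \sum_(d < msize f) hcomp d f.
Proof.
apply/mpolyP => m; rewrite raddf_sum /=.
under eq_bigr do rewrite mcoeff_hcomp.
case: (boolP (m \in msupp f)) => Hm; last first.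
  by rewrite memN_msupp_eq0 // big1 // => i _; case: ifP.
rewrite (bigD1 (Ordinal (msize_mdeg_lt Hm))) //= eqxx big1 ?addr0 // => i Hi.
by rewrite ifF //; apply: contraNF Hi => /eqP E; rewrite -val_eqE /= E.
Qed.

End Filter.

Section Ideals.
Variables (n : nat) (K : fieldType).
Local Notation A := {mpoly K[n]}.
Variable I : A -> Prop.
Hypothesis HI : is_ideal I.

Lemma is_ideal0 : I 0. Proof. by case: HI. Qed.
Lemma is_idealD f g : I f -> I g -> I (f + g). Proof. by case: HI => _ + _; apply. Qed.
Lemma is_idealM r f : I f -> I (r * f). Proof. by case: HI => _ _; apply. Qed.
Lemma is_idealMr r f : I f -> I (f * r). Proof. by rewrite mulrC; apply: is_idealM. Qed.
Lemma is_idealN f : I f -> I (- f). Proof. by rewrite -mulN1r; apply: is_idealM. Qed.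
Lemma is_idealB f g : I f -> I g -> I (f - g).
Proof. by move=> Hf /is_idealN; apply: is_idealD. Qed.
Lemma is_idealZ c f : I f -> I (c *: f). Proof. by rewrite -mul_mpolyC; apply: is_idealM. Qed.

Lemma is_ideal_sum (T : eqType) (r : seq T) (F : T -> A) :
  (forall x, x \in r -> I (F x)) -> I (\sum_(x <- r) F x).
Proof.
elim: r => [|x r IH] H; first by rewrite big_nil; apply: is_ideal0.
rewrite big_cons; apply: is_idealD; first by apply: H; rewrite mem_head.
by apply: IH => y Hy; apply: H; rewrite inE Hy orbT.
Qed.

End Ideals.

Section IdealGen.
Variables (n : nat) (K : fieldType).
Local Notation A := {mpoly K[n]}.

Lemma ideal_gen_ideal (S : A -> Prop) : is_ideal (ideal_gen S).
Proof.
split.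
- by exists [::]; rewrite big_nil.
- move=> f g [s [Hs ->]] [t [Ht ->]]; exists (s ++ t); split; last by rewrite big_cat.
  by move=> x; rewrite mem_cat => /orP [/Hs|/Ht].
- move=> r f [s [Hs ->]]; exists [seq (r * x.1, x.2) | x <- s]; split.
  + by move=> x /mapP [y /Hs Hy ->].
  + by rewrite big_map mulr_sumr; apply: eq_bigr => x _; rewrite mulrA.
Qed.

Lemma ideal_gen_mem (S : A -> Prop) p : S p -> ideal_gen S p.
Proof.
move=> Hp; exists [:: (1, p)]; rewrite big_seq1 mul1r; split => // x.
by rewrite inE => /eqP ->.
Qed.

Lemma ideal_gen_min (S T : A -> Prop) :
  is_ideal T -> (forall p, S p -> T p) -> forall p, ideal_gen S p -> T p.
Proof.
move=> HT HST p [s [Hs ->]]; apply: is_ideal_sum => // x /Hs /HST.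
exact: is_idealM.
Qed.

End IdealGen.

Section MonomialOrder.
Variables (n : nat) (K : fieldType).
Local Notation A := {mpoly K[n]}.
Local Notation mon := 'X_{1..n}.
Variable ord : rel mon.
Hypothesis Hord : monomial_order ord.

Lemma mo_refl : reflexive ord. Proof. by case: Hord => -[]. Qed.
Lemma mo_anti : antisymmetric ord. Proof. by case: Hord => -[]. Qed.
Lemma mo_trans : transitive ord. Proof. by case: Hord => -[]. Qed.
Lemma mo_total : total ord. Proof. by case: Hord => -[]. Qed.
Lemma mo_addr m m1 m2 : ord m1 m2 -> ord (m1 + m)%MM (m2 + m)%MM.
Proof. by case: Hord => _ [H _]; apply: H. Qed.
Lemma mo_addl m m1 m2 : ord m1 m2 -> ord (m + m1)%MM (m + m2)%MM.
Proof. by rewrite ![(m + _)%MM]addmC; apply: mo_addr. Qed.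

Lemma mo_ind (P : mon -> Prop) :
  (forall mu, (forall nu, nu != mu -> ord nu mu -> P nu) -> P mu) -> forall mu, P mu.
Proof.
move=> H mu; have [_ [_ wf]] := Hord.
elim: (wf mu) => {}mu _ IH; apply: H => nu H1 H2.
by apply: IH; rewrite H1.
Qed.

Lemma mo_min (P : mon -> Prop) x : P x ->
  exists y, P y /\ forall z, P z -> z != y -> ~~ ord z y.
Proof.
elim/mo_ind: x => x IH Px.
case: (classic (exists z, [/\ P z, z != x & ord z x])) => [[z [Pz H1 H2]]|H].
- exact: IH H1 H2 Pz.
- by exists x; split => // z Pz Hzx; apply/negP => Hzo; apply: H; exists z.
Qed.

(* If [k < 0] then [0 > k > k + k > ...] would contradict well-foundedness. *)
Lemma mo_0le k : ord 0%MM k.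
Proof.
have [//|Hk0] := orP (mo_total 0%MM k).
have [->|Hk] := eqVneq k 0%MM; first exact: mo_refl.
have [y [[j ->] Hmin]] := @mo_min (fun y => exists j, y = (k *+ j)%MM) _ (ex_intro _ 0%N erefl).
have Hne : (k *+ j.+1)%MM != (k *+ j)%MM.
  by rewrite mulmS -{2}[(k *+ j)%MM]add0m (inj_eq (@addIm _ _)).
move: (Hmin _ (ex_intro _ j.+1 erefl) Hne).
by rewrite mulmS -{2}[(k *+ j)%MM]add0m mo_addr.
Qed.

Lemma mo_lepm a b : (a <= b)%MM -> ord a b.
Proof. by move=> H; rewrite -(submK H) -{1}[a]add0m mo_addr // mo_0le. Qed.

Lemma seq_mo_max (s : seq mon) : s != [::] ->
  exists2 m, m \in s & forall m', m' \in s -> ord m' m.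
Proof.
elim: s => [//|x s IH] _.
have [->|/IH [m Hm Hmax]] := eqVneq s [::].
  by exists x; rewrite ?inE // => m'; rewrite inE => /eqP ->; apply: mo_refl.
have [Hxm|Hmx] := orP (mo_total x m).
- exists m; first by rewrite inE Hm orbT.
  by move=> m'; rewrite inE => /orP [/eqP ->|/Hmax].
- exists x; first by rewrite mem_head.
  move=> m'; rewrite inE => /orP [/eqP ->|/Hmax H]; first exact: mo_refl.
  exact: mo_trans H Hmx.
Qed.

Lemma is_LM_exists (f : A) : f != 0 -> exists m, is_LM ord f m.
Proof.
by rewrite -msupp_eq0 => /seq_mo_max [m Hm Hmax]; exists m.
Qed.

Lemma is_LM_uniq (f : A) m1 m2 : is_LM ord f m1 -> is_LM ord f m2 -> m1 = m2.
Proof. by move=> [H1 M1] [H2 M2]; apply: mo_anti; rewrite M1 ?M2. Qed.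

Lemma is_LM_eq_msupp (f g : A) m : msupp f =i msupp g -> is_LM ord f m -> is_LM ord g m.
Proof. by move=> E [H1 H2]; split => [|m']; rewrite -E //; apply: H2. Qed.

Lemma is_LM_MX (f : A) m a : is_LM ord f m -> is_LM ord (f * 'X_[a]) (a + m)%MM.
Proof.
move=> [H1 H2]; split; first by rewrite (perm_mem (msuppMX _ _)); apply/mapP; exists m.
move=> m'; rewrite (perm_mem (msuppMX _ _)) => /mapP [k Hk ->].
by apply: mo_addl; apply: H2.
Qed.

Lemma is_LMZ (f : A) m c : c != 0 -> is_LM ord f m -> is_LM ord (c *: f) m.
Proof. by move=> c0; apply: is_LM_eq_msupp => x; rewrite (perm_mem (msuppZ _ c0)). Qed.

Lemma is_LMX m : is_LM ord ('X_[m] : A) m.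
Proof. by split=> [|m']; rewrite msuppX inE // => /eqP ->; apply: mo_refl. Qed.

Lemma msuppB_lt_LM (f g : A) mu : is_LM ord f mu -> is_LM ord g mu -> f@_mu = g@_mu ->
  forall m, m \in msupp (f - g) -> m != mu /\ ord m mu.
Proof.
move=> [_ Lf] [_ Lg] Efg m Hm; split.
- by apply: contraTneq Hm => ->; rewrite mcoeff_msupp mcoeffB Efg subrr eqxx.
- by move: Hm => /msuppB_le; rewrite mem_cat => /orP [/Lf|/Lg].
Qed.

Definition is_lead_mono (I : A -> Prop) (mu : mon) : Prop :=
  exists f, [/\ I f, f != 0 & is_LM ord f mu].

Lemma is_lead_mono_lepm (I : A -> Prop) nu mu :
  is_ideal I -> is_lead_mono I nu -> (nu <= mu)%MM -> is_lead_mono I mu.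
Proof.
move=> HI [f [If f0 Lf]] Hd; exists (f * 'X_[mu - nu]); split.
- exact: is_idealMr HI _ _ If.
- by rewrite mulf_eq0 negb_or f0 -msupp_eq0 msuppX.
- by rewrite -{2}(submK Hd); apply: is_LM_MX.
Qed.

End MonomialOrder.

Section Dickson.
Variable n : nat.
Local Notation mon := 'X_{1..n}.

Definition lepm_upto k (nu mu : mon) := forall i : 'I_n, (i < k)%N -> (nu i <= mu i)%N.

(* Induction on the number [k] of coordinates taken into account; the [k]-th
   coordinate is handled by splitting on values below the largest one occurring
   in the basis found for the first [k] coordinates. *)
Lemma dickson_upto k (P : mon -> Prop) :
  exists s : seq mon, (forall x, x \in s -> P x) /\
    forall mu, P mu -> exists2 nu, nu \in s & lepm_upto k nu mu.
Proof.
elim: k P => [|k IH] P.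
  case: (classic (exists mu, P mu)) => [[mu Hmu]|Hno].
  - by exists [:: mu]; split=> [x|nu _]; [rewrite inE => /eqP -> | exists mu; rewrite ?inE].
  - by exists [::]; split => // mu Hmu; case: Hno; exists mu.
have [s [Hs Hdom]] := IH P.
case: (ltnP k n) => Hkn; last first.
  exists s; split => // mu /Hdom [nu Hnu Hd]; exists nu => // i Hi.
  by apply: Hd; apply: leq_trans (ltn_ord i) Hkn.
pose kk := Ordinal Hkn.
have lepm_upto_S nu mu : lepm_upto k nu mu -> (nu kk <= mu kk)%N -> lepm_upto k.+1 nu mu.
  move=> Hd Hkk i; rewrite ltnS leq_eqVlt => /orP [/eqP Ei|]; last exact: Hd.
  by have -> : i = kk by apply: val_inj.
have below B : exists t : seq mon, (forall x, x \in t -> P x) /\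
    forall mu, P mu -> (mu kk < B)%N -> exists2 nu, nu \in t & lepm_upto k.+1 nu mu.
  elim: B => [|B [t [Ht Htd]]]; first by exists [::]; split.
  have [u [Hu Hud]] := IH (fun mu => P mu /\ mu kk = B).
  exists (t ++ u); split.
    by move=> x; rewrite mem_cat => /orP [/Ht|/Hu []].
  move=> mu Hmu; rewrite ltnS leq_eqVlt => /orP [/eqP E|Hlt]; last first.
    by have [nu Hnu Hd] := Htd mu Hmu Hlt; exists nu => //; rewrite mem_cat Hnu.
  have [nu Hnu Hd] := Hud mu (conj Hmu E).
  exists nu; first by rewrite mem_cat Hnu orbT.
  by apply: lepm_upto_S => //; have [_ ->] := Hu _ Hnu; rewrite E.
have [t [Ht Htd]] := below (\max_(nu <- s) nu kk).
exists (s ++ t); split.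
  by move=> x; rewrite mem_cat => /orP [/Hs|/Ht].
move=> mu Hmu; case: (ltnP (mu kk) (\max_(nu <- s) nu kk)) => HB.
  by have [nu Hnu Hd] := Htd mu Hmu HB; exists nu => //; rewrite mem_cat Hnu orbT.
have [nu Hnu Hd] := Hdom mu Hmu.
exists nu; first by rewrite mem_cat Hnu.
apply: lepm_upto_S => //; apply: leq_trans HB.
exact: (@leq_bigmax_seq _ s xpredT (fun nu : mon => nu kk) nu Hnu).
Qed.

Lemma dickson (P : mon -> Prop) :
  exists s : seq mon, (forall x, x \in s -> P x) /\
    forall mu, P mu -> exists2 nu, nu \in s & (nu <= mu)%MM.
Proof.
have [s [Hs Hd]] := dickson_upto n P; exists s; split => // mu /Hd [nu Hnu H].
by exists nu => //; apply/mnm_lepP => i; apply: H.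
Qed.

End Dickson.

Lemma seq_choice (X Y : eqType) (R : X -> Y -> Prop) (l : seq X) :
  (forall x, x \in l -> exists y, R x y) ->
  exists G : seq Y, (forall y, y \in G -> exists2 x, x \in l & R x y) /\
                    (forall x, x \in l -> exists2 y, y \in G & R x y).
Proof.
elim: l => [|x l IH] H; first by exists [::]; split.
have [y Hy] := H x (mem_head _ _).
have [G [H1 H2]] := IH (fun x' Hx' => H x' (@mem_behead _ (x :: l) x' Hx')).
exists (y :: G); split.
- move=> y'; rewrite inE => /orP [/eqP ->|/H1 [x' Hx' R']].
  + by exists x; rewrite ?mem_head.
  + by exists x' => //; rewrite inE Hx' orbT.
- move=> x'; rewrite inE => /orP [/eqP ->|/H2 [y' Hy' R']].
  + by exists y; rewrite ?mem_head.
  + by exists y' => //; rewrite inE Hy' orbT.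
Qed.

Lemma mdividesP n (a b : 'X_{1..n}) : reflect (a <= b)%MM (mdivides a b).
Proof. by apply: (iffP forallP) => [H|/mnm_lepP //]; apply/mnm_lepP. Qed.

Section ReducedBasis.
Variables (n : nat) (K : fieldType).
Local Notation A := {mpoly K[n]}.
Local Notation mon := 'X_{1..n}.
Variable ord : rel mon.
Hypothesis Hord : monomial_order ord.
Variable I : A -> Prop.
Hypothesis HI : is_ideal I.
Local Notation lead_mono := (is_lead_mono ord I).

Definition in_normal_form (r : A) := forall m, m \in msupp r -> ~ lead_mono m.
Definition has_normal_form (p : A) := exists r, I (p - r) /\ in_normal_form r.

Lemma has_normal_form_mem p : I p -> has_normal_form p.
Proof. by exists 0; rewrite subr0; split => // m; rewrite msupp0. Qed.

Lemma has_normal_formD p q :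
  has_normal_form p -> has_normal_form q -> has_normal_form (p + q).
Proof.
move=> [r [Hr Sr]] [s [Hs Ss]]; exists (r + s); split.
- by rewrite opprD addrACA; apply: is_idealD.
- by move=> m /msuppD_le; rewrite mem_cat => /orP [/Sr|/Ss].
Qed.

Lemma has_normal_formZ c p : has_normal_form p -> has_normal_form (c *: p).
Proof.
move=> [r [Hr Sr]]; exists (c *: r); split; first by rewrite -scalerBr; apply: is_idealZ.
by move=> m /msuppZ_le /Sr.
Qed.

Lemma has_normal_form_msupp p :
  (forall m, m \in msupp p -> has_normal_form 'X_[m]) -> has_normal_form p.
Proof.
move=> H; rewrite (mpolyE p); elim: (msupp p) H => [|x s IH] H.
  by rewrite big_nil; apply: has_normal_form_mem; apply: is_ideal0.
rewrite big_cons; apply: has_normal_formD; first by apply: has_normal_formZ; apply/H/mem_head.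
by apply: IH => m Hm; apply: H; rewrite inE Hm orbT.
Qed.

(* Division algorithm: subtract from ['X_[mu]] a scaled element of [I] with leading
   monomial [mu], leaving only smaller monomials. *)
Lemma has_normal_formX mu : has_normal_form 'X_[mu].
Proof.
elim/(mo_ind Hord): mu => mu IH.
case: (classic (lead_mono mu)) => [[f [If f0 Lf]]|Nmu]; last first.
  exists 'X_[mu]; rewrite subrr; split; first exact: is_ideal0.
  by move=> m; rewrite msuppX inE => /eqP ->.
have fmu0 : f@_mu != 0 by rewrite -mcoeff_msupp; case: Lf.
set g := (f@_mu)^-1 *: f.
have Lg : is_LM ord g mu by apply: is_LMZ; rewrite ?invr_eq0.
rewrite -(subrK g 'X_[mu]).
apply: has_normal_formD; last by apply: has_normal_form_mem; apply: is_idealZ.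
apply: has_normal_form_msupp => m Hm.
have [] := msuppB_lt_LM (is_LMX K Hord mu) Lg _ Hm; last exact: IH.
by rewrite mcoeffX eqxx mcoeffZ mulVf.
Qed.

Definition reduced_elt (mu : mon) (g : A) :=
  [/\ I g, is_LM ord g mu, g@_mu = 1 & forall m, m \in msupp g -> m != mu -> ~ lead_mono m].

Lemma reduced_elt_neq0 mu g : reduced_elt mu g -> g != 0.
Proof. by case=> _ _ g1 _; apply: contra_eq_neq g1 => ->; rewrite mcoeff0 eq_sym oner_neq0. Qed.

Lemma reduced_elt_lead_mono mu g : reduced_elt mu g -> lead_mono mu.
Proof. by move=> Hg; exists g; have [Ig Lg _ _] := Hg; split => //; apply: reduced_elt_neq0 Hg. Qed.

Lemma reduced_elt_uniq mu g1 g2 : reduced_elt mu g1 -> reduced_elt mu g2 -> g1 = g2.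
Proof.
move=> [I1 L1 C1 S1] [I2 L2 C2 S2].
have [/eqP|Hd] := eqVneq (g1 - g2) 0; first by rewrite subr_eq0 => /eqP.
exfalso.
have [m Lm] := is_LM_exists Hord Hd.
have Tm : lead_mono m by exists (g1 - g2); split => //; apply: is_idealB.
have Hmu : m != mu.
  by apply: contraTneq (proj1 Lm) => ->; rewrite mcoeff_msupp mcoeffB C1 C2 subrr eqxx.
move: (proj1 Lm) => /msuppB_le; rewrite mem_cat => /orP [H|H].
- exact: S1 H Hmu Tm.
- exact: S2 H Hmu Tm.
Qed.

Lemma reduced_elt_exists mu : lead_mono mu -> exists g, reduced_elt mu g.
Proof.
move=> Tmu; have [r [Hr Sr]] := has_normal_formX mu.
have r_mu : r@_mu = 0 by apply/memN_msupp_eq0/negP => /Sr.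
have g_mu : ('X_[mu] - r)@_mu = 1 by rewrite mcoeffB mcoeffX eqxx r_mu subr0.
have g0 : 'X_[mu] - r != 0 by apply: contra_eq_neq g_mu => ->; rewrite mcoeff0 eq_sym oner_neq0.
have Sg m : m \in msupp ('X_[mu] - r) -> m != mu -> ~ lead_mono m.
  by move/msuppB_le; rewrite mem_cat msuppX inE => /orP [/eqP ->|/Sr //]; rewrite eqxx.
exists ('X_[mu] - r); split => //.
have [m Lm] := is_LM_exists Hord g0.
have [Em|Hne] := eqVneq m mu; first by move: Lm; rewrite Em.
by case: (Sg m (proj1 Lm) Hne); exists ('X_[mu] - r).
Qed.

Lemma minimal_lead_monos : exists s : seq mon,
  [/\ forall mu, mu \in s -> lead_mono mu,
      forall mu, lead_mono mu -> exists2 nu, nu \in s & (nu <= mu)%MM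
    & forall nu nu', nu \in s -> nu' \in s -> (nu' <= nu)%MM -> nu' = nu].
Proof.
have [s [Hs Hcov]] := dickson lead_mono.
pose s' := [seq mu <- s | ~~ has (fun nu => (nu != mu) && (nu <= mu)%MM) s].
exists s'; split.
- by move=> mu; rewrite mem_filter => /andP [_ /Hs].
- move=> mu Tmu; have [nu0 Hnu0 Hd0] := Hcov mu Tmu.
  have [y [[Hy Hyd] Hmin]] :=
    @mo_min _ _ Hord (fun y => y \in s /\ (y <= mu)%MM) nu0 (conj Hnu0 Hd0).
  exists y => //; rewrite mem_filter Hy andbT; apply/hasPn => z Hz.
  apply/negP => /andP [Hzy Hzd].
  by move: (Hmin z (conj Hz (lepm_trans Hzd Hyd)) Hzy); rewrite mo_lepm.
- move=> nu nu'; rewrite mem_filter => /andP [/hasPn Hmin _].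
  rewrite mem_filter => /andP [_ Hnu'] Hd; apply/eqP.
  by move: (Hmin nu' Hnu'); rewrite Hd andbT negbK.
Qed.

Definition reduced_basis (G : seq A) :=
  [/\ forall g, g \in G -> exists mu, reduced_elt mu g,
      forall mu, lead_mono mu -> exists g nu, [/\ g \in G, reduced_elt nu g & (nu <= mu)%MM]
    & forall g g' nu nu', g \in G -> g' \in G -> reduced_elt nu g -> reduced_elt nu' g' ->
        (nu' <= nu)%MM -> nu' = nu].

Lemma reduced_basis_exists : exists G : seq A, reduced_basis G.
Proof.
have [s [Hs Hcov Hanti]] := minimal_lead_monos.
have [G [HG1 HG2]] :=
  @seq_choice _ _ reduced_elt s (fun mu Hmu => reduced_elt_exists (Hs mu Hmu)).
exists G; split.
- by move=> g /HG1 [mu _ Hg]; exists mu.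
- move=> mu /Hcov [nu Hnu Hd]; have [g Hg Sg] := HG2 nu Hnu.
  by exists g, nu.
- move=> g g' nu nu' /HG1 [mu Hmu [_ Lg _ _]] /HG1 [mu' Hmu' [_ Lg' _ _]] [_ L _ _] [_ L' _ _].
  by rewrite (is_LM_uniq Hord L Lg) (is_LM_uniq Hord L' Lg'); apply: Hanti.
Qed.

Lemma reduced_basis_groebner (G : seq A) : reduced_basis G -> is_reduced_groebner ord I G.
Proof.
move=> [HG1 HG2 Hanti]; split.
- split; first by move=> g /HG1 [mu []].
  move=> p; split; apply: ideal_gen_min; try exact: ideal_gen_ideal.
  + move=> _ [f [m [If f0 Lf ->]]].
    have [g [nu [Hg Sg Hd]]] := HG2 m (ex_intro _ f (And3 If f0 Lf)).
    have [_ Lg _ _] := Sg.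
    rewrite -(submK Hd) mpolyXD; apply: is_idealM; first exact: ideal_gen_ideal.
    apply: ideal_gen_mem.
    by exists g, nu; split => //; apply: reduced_elt_neq0 Sg.
  + move=> _ [g [m [Hg g0 Lg ->]]]; apply: ideal_gen_mem; exists g, m; split => //.
    by have [mu []] := HG1 g Hg.
- move=> g /HG1 [mu [Ig Lg Cg _]]; by exists mu.
move=> g g' m m' Hg Hg' Hne Lm' Hm.
have [mu Sg] := HG1 g Hg; have [mu' Sg'] := HG1 g' Hg'.
have [_ Lg _ Ng] := Sg; have [_ Lg' _ _] := Sg'.
rewrite (is_LM_uniq Hord Lm' Lg'); apply/mdividesP => Hd.
have [Emu|Hmne] := eqVneq m mu; last first.
  by apply: (Ng m Hm Hmne); apply: is_lead_mono_lepm HI (reduced_elt_lead_mono Sg') Hd.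
rewrite Emu in Hd; have Emu' := Hanti _ _ _ _ Hg Hg' Sg Sg' Hd.
rewrite Emu' in Sg'; by move: Hne; rewrite (reduced_elt_uniq Sg Sg') eqxx.
Qed.

Lemma reduced_groebner_exists : exists G : seq A,
  [/\ is_reduced_groebner ord I G,
      forall g, g \in G -> exists mu, reduced_elt mu g
    & forall mu, lead_mono mu -> exists g nu, [/\ g \in G, reduced_elt nu g & (nu <= mu)%MM]].
Proof.
have [G BG] := reduced_basis_exists.
by exists G; have [HG1 HG2 _] := BG; split => //; apply: reduced_basis_groebner.
Qed.

End ReducedBasis.

Section WeightOrder.
Variables (n : nat) (R : realType).
Local Notation mon := 'X_{1..n}.
Variable w : 'I_n -> R.

Lemma wdotD (a b : mon) : wdot w (a + b)%MM = wdot w a + wdot w b.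
Proof. by rewrite /wdot -big_split; apply: eq_bigr => i _; rewrite mnmDE natrD mulrDr. Qed.

(* Total degree comes first so that only finitely many monomials lie below a
   given one, which makes the order well founded for arbitrary real weights;
   on homogeneous polynomials it refines [w]. *)
Definition weight_order : rel mon := fun a b =>
  (mdeg a < mdeg b)%N || ((mdeg a == mdeg b) &&
    ((wdot w a < wdot w b) || ((wdot w a == wdot w b) && (a <= b)%O))).

Lemma weight_order_mdeg a b : weight_order a b -> (mdeg a <= mdeg b)%N.
Proof. by case/orP => [/ltnW //|/andP [/eqP -> _]]. Qed.

Lemma weight_order_wdot a b : weight_order a b -> mdeg a = mdeg b -> wdot w a <= wdot w b.
Proof.
case/orP => [|/andP [_ /orP [/ltW //|/andP [/eqP -> _]]]] //.
by move=> + E; rewrite E ltnn.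
Qed.

Lemma weight_order_refl : reflexive weight_order.
Proof. by move=> a; rewrite /weight_order !eqxx lexx /= !orbT. Qed.

Lemma weight_order_anti : antisymmetric weight_order.
Proof.
move=> a b /andP [/orP [H1|/andP [/eqP E1 H1]] /orP [H2|/andP [/eqP E2 H2]]].
- by move: (ltn_trans H1 H2); rewrite ltnn.
- by move: H1; rewrite E2 ltnn.
- by move: H2; rewrite E1 ltnn.
move: H1 H2 => /orP [H1|/andP [/eqP F1 H1]] /orP [H2|/andP [/eqP F2 H2]].
- by move: (lt_trans H1 H2); rewrite ltxx.
- by move: H1; rewrite F2 ltxx.
- by move: H2; rewrite F1 ltxx.
- by apply: le_anti; rewrite H1 H2.
Qed.

Lemma weight_order_trans : transitive weight_order.
Proof.
move=> b a c /orP [H1|/andP [/eqP E1 H1]] /orP [H2|/andP [/eqP E2 H2]].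
- by rewrite /weight_order (ltn_trans H1 H2).
- by rewrite /weight_order -E2 H1.
- by rewrite /weight_order E1 H2.
apply/orP; right; rewrite E1 E2 eqxx /=.
move: H1 H2 => /orP [H1|/andP [/eqP F1 H1]] /orP [H2|/andP [/eqP F2 H2]].
- by rewrite (lt_trans H1 H2).
- by rewrite -F2 H1.
- by rewrite F1 H2.
- by rewrite F1 F2 eqxx (le_trans H1 H2) orbT.
Qed.

Lemma weight_order_total : total weight_order.
Proof.
move=> a b; rewrite /weight_order; case: (ltngtP (mdeg a) (mdeg b)) => //= _.
by rewrite eq_sym; case: (ltgtP (wdot w a) (wdot w b)) => //= _; rewrite le_total.
Qed.

Lemma weight_order_addr m m1 m2 :
  weight_order m1 m2 -> weight_order (m1 + m)%MM (m2 + m)%MM.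
Proof.
move=> /orP [H|/andP [/eqP E H]]; first by rewrite /weight_order !mdegD ltn_add2r H.
apply/orP; right; rewrite !mdegD E eqxx /= !wdotD ltrD2r.
by rewrite (inj_eq (addIr _)) lemc_add2l.
Qed.

(* Every monomial strictly below [a] has degree at most [mdeg a]; we induct on
   the (finite) number of such monomials. *)
Lemma weight_order_wf : well_founded (fun a b => (a != b) && weight_order a b).
Proof.
pose S a b := (a != b) && weight_order a b.
have S_trans x y z : S x y -> S y z -> S x z.
  move=> /andP [Hxy Oxy] /andP [Hyz Oyz]; apply/andP; split; last exact: weight_order_trans Oxy Oyz.
  apply: contra_neq Hxy => Exz; subst z.
  by apply: weight_order_anti; rewrite Oxy Oyz.
move=> a0; pose D := (mdeg a0).+1.
suff acc k (a : mon) (Ha : (mdeg a < D)%N) :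
    (#|[set x : 'X_{1..n < D} | S (val x) a]| <= k)%N -> Acc S a.
  exact: (acc _ a0 (ltnSn _) (leqnn _)).
elim: k a Ha => [|k IH] a Ha Hc; constructor => y Hy;
  have Hyd : (mdeg y < D)%N by apply: leq_ltn_trans (weight_order_mdeg (proj2 (andP Hy))) Ha.
  by move: Hc; rewrite leqn0 cards_eq0 => /eqP /setP /(_ (BMultinom Hyd)); rewrite !inE Hy.
apply: (IH y Hyd); rewrite -ltnS; apply: leq_trans Hc; apply/proper_card/properP; split.
- by apply/subsetP => x; rewrite !inE => /S_trans; apply.
- by exists (BMultinom Hyd); rewrite !inE /= ?Hy // /S eqxx.
Qed.

Lemma weight_order_monomial_order : monomial_order weight_order.
Proof.
split; first by split; [exact: weight_order_refl|exact: weight_order_anti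
                       |exact: weight_order_trans|exact: weight_order_total].
by split=> [m1 m2 m|]; [exact: weight_order_addr | exact: weight_order_wf].
Qed.

End WeightOrder.

Section InitialForms.
Variables (n : nat) (K : fieldType) (R : realType).
Local Notation A := {mpoly K[n]}.
Variable w : 'I_n -> R.

Definition wpart (c : R) (f : A) : A := mfilter (fun m => wdot w m == c) f.

Lemma wpart0 c : wpart c 0 = 0. Proof. exact: mfilter0. Qed.
Lemma wpartD c f g : wpart c (f + g) = wpart c f + wpart c g. Proof. exact: mfilterD. Qed.
Lemma wpartZ c k f : wpart c (k *: f) = k *: wpart c f. Proof. exact: mfilterZ. Qed.

Lemma mcoeff_init_w (f : A) m :
  (init_w w f)@_m = if all (fun m' => wdot w m' <= wdot w m) (msupp f) then f@_m else 0.
Proof. exact: (mcoeff_mfilter (fun m => all (fun m' => wdot w m' <= wdot w m) (msupp f))). Qed.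

Lemma msupp_init_w_sub (f : A) : {subset msupp (init_w w f) <= msupp f}.
Proof. exact: msupp_mfilter_sub. Qed.

Lemma init_w0 : init_w w (0 : A) = 0.
Proof. by apply/mpolyP => m; rewrite mcoeff_init_w mcoeff0; case: ifP. Qed.

Lemma wdot_argmax (f : A) : f != 0 ->
  exists2 m0, m0 \in msupp f & {in msupp f, forall m, wdot w m <= wdot w m0}.
Proof.
rewrite -msupp_eq0; elim: (msupp f) => [//|x s IH] _.
have [->|/IH [m0 Hm0 Hmax]] := eqVneq s [::].
  by exists x; rewrite ?mem_head // => m; rewrite inE => /eqP ->.
have [Hxm|/ltW Hmx] := leP (wdot w x) (wdot w m0).
- exists m0; first by rewrite inE Hm0 orbT.
  by move=> m; rewrite inE => /orP [/eqP ->|/Hmax].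
- exists x; first by rewrite mem_head.
  by move=> m; rewrite inE => /orP [/eqP ->|/Hmax /le_trans]; last apply.
Qed.

Lemma init_w_wpart (f : A) m0 : m0 \in msupp f ->
  {in msupp f, forall m, wdot w m <= wdot w m0} -> init_w w f = wpart (wdot w m0) f.
Proof.
move=> Hm0 Hmax; apply/mpolyP => m; rewrite mcoeff_init_w mcoeff_mfilter.
case: (boolP (m \in msupp f)) => Hm; last by rewrite memN_msupp_eq0 //; do 2 case: ifP.
have [E|Ne] := eqVneq (wdot w m) (wdot w m0).
  by rewrite ifT //; apply/allP => m' /Hmax; rewrite E.
rewrite ifF //; apply: contraNF Ne => /allP /(_ _ Hm0) Hle.
by rewrite eq_le Hle Hmax.
Qed.

Lemma mcoeff_init_w_max (f : A) m0 :
  {in msupp f, forall m, wdot w m <= wdot w m0} -> (init_w w f)@_m0 = f@_m0.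
Proof. by move=> Hmax; rewrite mcoeff_init_w ifT //; apply/allP. Qed.

Lemma mcoeff_init_w_msupp (f : A) m : m \in msupp (init_w w f) -> (init_w w f)@_m = f@_m.
Proof. by rewrite mcoeff_msupp mcoeff_init_w; case: ifP => //; rewrite eqxx. Qed.

Lemma init_w_eq0 (f : A) : (init_w w f == 0) = (f == 0).
Proof.
have [->|f0] := eqVneq f 0; first by rewrite init_w0 eqxx.
have [m0 Hm0 Hmax] := wdot_argmax f0.
apply/negbTE; rewrite -msupp_eq0; apply/eqP => E.
by move: Hm0; rewrite mcoeff_msupp -(mcoeff_init_w_max Hmax) memN_msupp_eq0 ?E ?eqxx.
Qed.

Lemma wpart_eq0 c (f : A) : {in msupp f, forall m, wdot w m != c} -> wpart c f = 0.
Proof.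
move=> Hf; apply/mpolyP => m; rewrite mcoeff_mfilter mcoeff0.
by case: (boolP (m \in msupp f)) => [/Hf /negbTE -> | /memN_msupp_eq0 ->] //; case: ifP.
Qed.

Lemma wpartMX c (f : A) a : wpart (wdot w a + c) (f * 'X_[a]) = wpart c f * 'X_[a].
Proof.
rewrite /wpart mfilterMX; congr (_ * _); apply: eq_mfilter => k.
by rewrite wdotD (inj_eq (addrI _)).
Qed.

Lemma init_wMX (f : A) a : init_w w (f * 'X_[a]) = init_w w f * 'X_[a].
Proof.
have [->|f0] := eqVneq f 0; first by rewrite mul0r init_w0 mul0r.
have [m0 Hm0 Hmax] := wdot_argmax f0.
rewrite (init_w_wpart Hm0 Hmax) -wpartMX -wdotD; apply: init_w_wpart.
  by rewrite (perm_mem (msuppMX _ _)); apply/mapP; exists m0.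
move=> m; rewrite (perm_mem (msuppMX _ _)) => /mapP [k Hk ->].
by rewrite !wdotD lerD2l Hmax.
Qed.

Local Notation ow := (weight_order w).

Lemma homog_LM_wdot (f : A) mu : is_LM ow f mu -> f \is (mdeg mu).-homog ->
  {in msupp f, forall m, wdot w m <= wdot w mu}.
Proof.
move=> [_ Lf] /dhomogP Hf m Hm.
by apply: weight_order_wdot; [apply: Lf | apply: Hf].
Qed.

Lemma init_w_homog (f : A) mu : is_LM ow f mu -> f \is (mdeg mu).-homog ->
  init_w w f = wpart (wdot w mu) f.
Proof. by move=> Lf Hf; apply: init_w_wpart (proj1 Lf) (homog_LM_wdot Lf Hf). Qed.

End InitialForms.

Section HomogeneousGenerators.
Variables (n : nat) (K : fieldType) (R : realType).
Local Notation A := {mpoly K[n]}.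
Variable w : 'I_n -> R.
Local Notation ow := (weight_order w).
Local Notation Hord := (weight_order_monomial_order w).
Variable J : A -> Prop.
Hypothesis HJ : is_homogeneous_ideal J.
Let HJi : is_ideal J := proj1 HJ.

Lemma hcomp_mem d f : J f -> J (hcomp d f).
Proof. by case: HJ => _; apply. Qed.

(* The degree-[mdeg mu] component of a reduced element is again reduced, hence equal to it. *)
Lemma reduced_elt_homog mu g : reduced_elt ow J mu g -> g \is (mdeg mu).-homog.
Proof.
move=> Sg; have [Jg [g_mu Lg] g1 Ng] := Sg.
have sub : {subset msupp (hcomp (mdeg mu) g) <= msupp g} := @msupp_mfilter_sub _ _ _ _.
suff <- : hcomp (mdeg mu) g = g by apply: hcomp_homog.
apply: (reduced_elt_uniq Hord HJi _ Sg); split.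
- exact: hcomp_mem.
- split=> [|m /sub]; last exact: Lg.
  by rewrite mcoeff_msupp mcoeff_hcomp eqxx -mcoeff_msupp.
- by rewrite mcoeff_hcomp eqxx.
- by move=> m /sub; apply: Ng.
Qed.

Variable G : seq A.
Hypothesis HG2 : forall mu, is_lead_mono ow J mu ->
  exists g nu, [/\ g \in G, reduced_elt ow J nu g & (nu <= mu)%MM].

Local Notation gen_init := (ideal_gen (fun p => exists2 h, h \in G & p = init_w w h)).
Let gen_init_ideal : is_ideal gen_init := ideal_gen_ideal _.

(* Reduce [f] by a multiple of the basis element whose leading monomial divides that
   of [f]: the weight-[c] part changes by a multiple of an initial form of [G], and
   the leading monomial decreases. *)
Lemma wpart_homog_gen_init mu f c : J f -> is_LM ow f mu -> f \is (mdeg mu).-homog ->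
  wdot w mu <= c -> gen_init (wpart w c f).
Proof.
elim/(mo_ind Hord): mu f c => mu IH f c Jf Lf Hf Hc.
have Hmax := homog_LM_wdot Lf Hf.
have [Hlt|Hge] := ltP (wdot w mu) c.
  rewrite wpart_eq0; first exact: is_ideal0.
  by move=> m /Hmax Hm; rewrite lt_eqF // (le_lt_trans Hm Hlt).
have {Hc Hge} -> : c = wdot w mu by apply/eqP; rewrite eq_le Hc Hge.
have f0 : f != 0 by apply: contraTneq (proj1 Lf) => ->; rewrite msupp0.
have [h [nu [Hh Sh Hd]]] := HG2 (ex_intro _ f (And3 Jf f0 Lf)).
have [Jh Lh h1 _] := Sh; have Hhom := reduced_elt_homog Sh.
set a := (mu - nu)%MM; have Ea : (a + nu = mu)%MM by rewrite /a submK.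
set fh := f@_mu *: (h * 'X_[a]).
have Lfh : is_LM ow fh mu.
  apply: is_LMZ; first by rewrite -mcoeff_msupp; case: Lf.
  by rewrite -Ea; apply: is_LM_MX Hord _ _ _ Lh.
have wpart_fh : wpart w (wdot w mu) fh = f@_mu *: (init_w w h * 'X_[a]).
  by rewrite wpartZ -Ea wdotD wpartMX (init_w_homog Lh Hhom).
rewrite -[X in wpart w _ X](subrK fh f) wpartD wpart_fh; apply: (is_idealD gen_init_ideal).
- have [->|f'0] := eqVneq (f - fh) 0; first by rewrite wpart0; apply: is_ideal0.
  have [mu' Lf'] := is_LM_exists Hord f'0.
  have fh_mu : f@_mu = fh@_mu by rewrite mcoeffZ -Ea mcoeffMX h1 mulr1.
  have [Hne Hlt] := msuppB_lt_LM Lf Lfh fh_mu (proj1 Lf').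
  have Hf' : f - fh \is (mdeg mu).-homog.
    rewrite rpredB // rpredZ // -Ea mdegD addnC; apply: dhomogM => //.
    by rewrite dhomogX.
  have Emu' : mdeg mu' = mdeg mu by apply: (dhomog_mf Hf'); case: Lf'.
  apply: (IH mu' Hne Hlt) Lf' _ _.
  + apply: (is_idealB HJi Jf); apply: (is_idealZ HJi); exact: (is_idealMr HJi _ Jh).
  + by rewrite Emu'.
  + by apply: weight_order_wdot.
- apply: (is_idealZ gen_init_ideal); apply: (is_idealMr gen_init_ideal).
  by apply: ideal_gen_mem; exists h.
Qed.

Lemma init_w_gen_init f : J f -> gen_init (init_w w f).
Proof.
move=> Jf; have [->|f0] := eqVneq f 0; first by rewrite init_w0; apply: is_ideal0.
have [m0 Hm0 Hmax] := wdot_argmax w f0.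
rewrite (init_w_wpart Hm0 Hmax) {1}(sum_hcomp f) /wpart mfilter_sum.
apply: is_ideal_sum => // d _.
have [->|fd0] := eqVneq (hcomp d f) 0; first by rewrite mfilter0; apply: is_ideal0.
have [mu Lmu] := is_LM_exists Hord fd0.
have Emu : mdeg mu = d by apply: (dhomog_mf (hcomp_homog d f)); case: Lmu.
apply: (wpart_homog_gen_init _ Lmu); first exact: hcomp_mem.
- by rewrite Emu hcomp_homog.
- by apply: Hmax; apply: msupp_mfilter_sub (proj1 Lmu).
Qed.

Lemma init_ideal_w_gen_init p : init_ideal_w w J p -> gen_init p.
Proof.
apply: ideal_gen_min; first exact: ideal_gen_ideal.
by move=> _ [f [Jf ->]]; apply: init_w_gen_init.
Qed.

End HomogeneousGenerators.

Section InitialIdealLeadMono.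
Variables (n : nat) (K : fieldType) (R : realType).
Local Notation A := {mpoly K[n]}.
Variable w : 'I_n -> R.
Local Notation ow := (weight_order w).
Variable I : A -> Prop.
Hypothesis HI : is_homogeneous_ideal I.
Let HIi : is_ideal I := proj1 HI.

Definition lifts_to (d : nat) (c : R) (p : A) := exists F, [/\ I F, F \is d.-homog,
  {in msupp F, forall m, wdot w m <= c} & wpart w c (hcomp d p) = wpart w c F].

Section Lifts.
Variables (d : nat) (c : R).

Lemma lifts_to0 : lifts_to d c 0.
Proof.
exists 0; split; [exact: is_ideal0 | exact: rpred0 | by move=> m; rewrite msupp0 |].
by rewrite hcompE !mfilter0.
Qed.

Lemma lifts_toD p q : lifts_to d c p -> lifts_to d c q -> lifts_to d c (p + q).
Proof.
move=> [F [IF hF bF EF]] [F' [IF' hF' bF' EF']]; exists (F + F'); split.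
- exact: is_idealD.
- exact: rpredD.
- by move=> m /msuppD_le; rewrite mem_cat => /orP [/bF|/bF'].
- by rewrite hcompE mfilterD -hcompE !wpartD EF EF'.
Qed.

Lemma lifts_toZ k p : lifts_to d c p -> lifts_to d c (k *: p).
Proof.
move=> [F [IF hF bF EF]]; exists (k *: F); split.
- exact: is_idealZ.
- exact: rpredZ.
- by move=> m /msuppZ_le /bF.
- by rewrite hcompE mfilterZ -hcompE !wpartZ EF.
Qed.

Lemma lifts_to_init_w g : I g -> lifts_to d c (init_w w g).
Proof.
move=> Ig; have [->|g0] := eqVneq g 0; first by rewrite init_w0; apply: lifts_to0.
have [m0 Hm0 Hmax] := wdot_argmax w g0.
rewrite (init_w_wpart Hm0 Hmax).
have [Ec|Nc] := eqVneq (wdot w m0) c.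
- exists (hcomp d g); split.
  + by case: HI => _; apply.
  + exact: hcomp_homog.
  + by move=> m /msupp_mfilter_sub /Hmax; rewrite Ec.
  + apply/mpolyP => m; rewrite !mcoeff_mfilter Ec.
    by case: (wdot w m == c); case: (mdeg m == d).
- exists 0; split; [exact: is_ideal0 | exact: rpred0 | by move=> m; rewrite msupp0 |].
  apply/mpolyP => m; rewrite !mcoeff_mfilter mcoeff0.
  by case: (eqVneq (wdot w m) c) => [->|//]; rewrite [c == _]eq_sym (negbTE Nc); case: ifP.
Qed.

Lemma lifts_to_init_ideal_w p : init_ideal_w w I p -> lifts_to d c p.
Proof.
move=> [s [Hs ->]]; elim: s Hs => [|[a p'] s IH] Hs; first by rewrite big_nil; apply: lifts_to0.
rewrite big_cons; apply: lifts_toD; last by apply: IH => x Hx; apply: Hs; rewrite inE Hx orbT.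
have [f [If ->]] := Hs _ (mem_head _ _).
rewrite /= [a]mpolyE mulr_suml; elim: (msupp a) => [|m ms IHm].
  by rewrite big_nil; apply: lifts_to0.
rewrite big_cons; apply: lifts_toD => //.
rewrite -scalerAl mulrC -init_wMX; apply/lifts_toZ/lifts_to_init_w.
exact: is_idealMr.
Qed.

End Lifts.

Lemma lead_mono_init_ideal_w r mu :
  init_ideal_w w I r -> is_LM ow r mu -> is_lead_mono ow I mu.
Proof.
move=> Ir [r_mu Lr].
have [F [IF hF bF EF]] := lifts_to_init_ideal_w (mdeg mu) (wdot w mu) Ir.
have coefF m : mdeg m = mdeg mu -> wdot w m = wdot w mu -> F@_m = r@_m.
  move=> Em Ew; have := congr1 (mcoeff m) EF.
  by rewrite !mcoeff_mfilter Em Ew !eqxx.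
have F_mu : mu \in msupp F by rewrite mcoeff_msupp coefF // -mcoeff_msupp.
exists F; split => //; first by apply: contraTneq F_mu => ->; rewrite msupp0.
split => // m Hm; have Em := dhomog_mf hF Hm.
have [Hlt|Hge] := ltP (wdot w m) (wdot w mu); first by rewrite /weight_order Em eqxx Hlt ltnn.
have Ew : wdot w m = wdot w mu by apply/eqP; rewrite eq_le Hge bF.
by apply: Lr; rewrite mcoeff_msupp -coefF // -mcoeff_msupp.
Qed.

End InitialIdealLeadMono.

Section SameSupports.
Variables (n : nat) (K : fieldType) (R : realType).
Local Notation A := {mpoly K[n]}.

Lemma in_cUGB_mem (I : A -> Prop) f : in_cUGB I f -> I f.
Proof. by move=> [ord [G [_ [[HG _] _ _] Hf]]]; apply: HG. Qed.

Lemma reduced_groebner_in_cUGB ord (I : A -> Prop) G g :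
  monomial_order ord -> is_reduced_groebner ord I G -> g \in G -> in_cUGB I g.
Proof. by move=> Hord HG Hg; exists ord, G. Qed.

Lemma same_supports_sym (G1 G2 : A -> Prop) : same_supports G1 G2 -> same_supports G2 G1.
Proof. by case. Qed.

Lemma init_w_eq_msupp (w w' : 'I_n -> R) (g h : A) :
  msupp g =i msupp h -> init_w w g = init_w w' g -> init_w w h = init_w w' h.
Proof.
move=> Es E; apply/mpolyP => m; have := congr1 (mcoeff m) E.
rewrite !mcoeff_init_w !(eq_all_r Es).
case: (boolP (m \in msupp h)) => Hm; last by rewrite (memN_msupp_eq0 Hm) !if_same.
have g0 : g@_m != 0 by rewrite -mcoeff_msupp Es.
by case: ifP; case: ifP => // _ _ Egm; move: g0; rewrite ?Egm -?Egm eqxx.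
Qed.

Variables (I J : A -> Prop) (w : 'I_n -> R).
Hypotheses (HI : is_homogeneous_ideal I) (HJ : is_homogeneous_ideal J).
Hypothesis HIJ : same_supports (in_cUGB I) (in_cUGB J).
Local Notation ow := (weight_order w).
Local Notation Hord := (weight_order_monomial_order w).

(* A nonzero such [r] would have a leading monomial of [I], divisible by the leading
   monomial of some element of the reduced basis of [I]; the element of [cUGB(J)]
   with the same support makes that a leading monomial of [J], which the reduced
   element [h] is not allowed to contain outside [nu]. *)
Lemma init_ideal_w_msupp_eq0 h nu r : reduced_elt ow J nu h ->
  init_ideal_w w I r -> {subset msupp r <= msupp h} -> nu \notin msupp r -> r = 0.
Proof.
move=> [_ _ _ Nh] Ir Hsub Hnu; have [//|r0] := eqVneq r 0; exfalso.
have [mu Lr] := is_LM_exists Hord r0.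
have [GI [RGI HGI1 HGI2]] := reduced_groebner_exists Hord (proj1 HI).
have [g [nu' [Hg Sg Hd]]] := HGI2 mu (lead_mono_init_ideal_w HI Ir Lr).
have [_ Lg _ _] := Sg.
have [h' [Uh' h'0 Eh']] := HIJ.1 g (reduced_groebner_in_cUGB Hord RGI Hg) (reduced_elt_neq0 Sg).
have J_nu' : is_lead_mono ow J nu'.
  by exists h'; split => //; [apply: in_cUGB_mem | apply: is_LM_eq_msupp Lg => m; rewrite Eh'].
apply: (Nh mu (Hsub _ (proj1 Lr))); first by apply: contraNneq Hnu => <-; case: Lr.
exact (is_lead_mono_lepm Hord (proj1 HJ) J_nu' Hd).
Qed.

Lemma init_w_eq_of_reduced (w' : 'I_n -> R) h nu g :
  (forall p, init_ideal_w w' I p -> init_ideal_w w I p) ->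
  reduced_elt ow J nu h -> I g -> msupp g =i msupp h -> init_w w g = init_w w' g.
Proof.
move=> Hincl Sh Ig Egh; have [_ Lh _ _] := Sh.
have Ig_w : init_ideal_w w I (init_w w g) by apply: ideal_gen_mem; exists g.
have Ig_w' : init_ideal_w w I (init_w w' g) by apply/Hincl/ideal_gen_mem; exists g.
have sub_h (u : 'I_n -> R) : {subset msupp (init_w u g) <= msupp h}.
  by move=> m /msupp_init_w_sub; rewrite Egh.
have g_nu : (init_w w g)@_nu = g@_nu.
  apply: mcoeff_init_w_max => m; rewrite Egh.
  exact: homog_LM_wdot Lh (reduced_elt_homog HJ Sh) m.
have [Hnu|Hnu] := boolP (nu \in msupp (init_w w' g)); last first.
  have /eqP := init_ideal_w_msupp_eq0 Sh Ig_w' (sub_h w') Hnu.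
  by rewrite init_w_eq0 => /eqP g0; move: (proj1 Lh); rewrite -Egh g0 msupp0.
apply/eqP; rewrite -subr_eq0; apply/eqP; apply: (init_ideal_w_msupp_eq0 Sh).
- exact (is_idealB (ideal_gen_ideal _) Ig_w Ig_w').
- by move=> m /msuppB_le; rewrite mem_cat => /orP [/sub_h|/sub_h].
- by rewrite mcoeff_msupp mcoeffB g_nu mcoeff_init_w_msupp // subrr eqxx.
Qed.

End SameSupports.

Lemma init_ideal_w_subset n (K : fieldType) (R : realType) (I J : {mpoly K[n]} -> Prop)
    (w w' : 'I_n -> R) :
  is_homogeneous_ideal I -> is_homogeneous_ideal J ->
  same_supports (in_cUGB I) (in_cUGB J) ->
  (forall p, init_ideal_w w' I p -> init_ideal_w w I p) ->
  forall p, init_ideal_w w J p -> init_ideal_w w' J p.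
Proof.
move=> HI HJ HIJ Hincl p Jp.
have Hord := weight_order_monomial_order w.
have [G [RG HG1 HG2]] := reduced_groebner_exists Hord (proj1 HJ).
apply: ideal_gen_min (init_ideal_w_gen_init HJ HG2 Jp); first exact: ideal_gen_ideal.
move=> _ [h Hh ->]; have [nu Sh] := HG1 h Hh.
have [g [Ug g0 Egh]] := HIJ.2 h (reduced_groebner_in_cUGB Hord RG Hh) (reduced_elt_neq0 Sh).
have Ew := init_w_eq_of_reduced HI HJ HIJ Hincl Sh (in_cUGB_mem Ug) Egh.
rewrite (init_w_eq_msupp Egh Ew); apply: ideal_gen_mem.
by exists h; have [Jh _ _ _] := Sh.
Qed.

Theorem corollary2p10 (R : realType) (n : nat) (K : fieldType)
    (I J : {mpoly K[n]} -> Prop) :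
  is_homogeneous_ideal I -> is_homogeneous_ideal J ->
  same_supports (in_cUGB I) (in_cUGB J) ->
  forall w w' : 'I_n -> R,
    same_set (init_ideal_w w I) (init_ideal_w w' I) <->
    same_set (init_ideal_w w J) (init_ideal_w w' J).
Proof.
move=> HI HJ HIJ w w'; have HJI := same_supports_sym HIJ.
split => E p; split.
- by apply: init_ideal_w_subset HI HJ HIJ _ p => q /E.
- by apply: init_ideal_w_subset HI HJ HIJ _ p => q /E.
- by apply: init_ideal_w_subset HJ HI HJI _ p => q /E.
- by apply: init_ideal_w_subset HJ HI HJI _ p => q /E.
Qed.
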